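(* Let $k=h/2$, with $h(r)=2(r-r_+)+4M\log(r/r_+)+\frac{3M^2(r_+-r)^2}{r_+r^2}+2M\arctan\frac{(C_{\mathrm{hyp}}-1)M}{r}-2M\arctan\frac{(C_{\mathrm{hyp}}-1)M}{r_+}$ and $C_{\mathrm{hyp}}\ge1$. Then $t_{\mathrm{Hor}}=v-k(r)$ is a horizon crossing time function on the domain of outer communication of a subextreme Kerr spacetime, and $k(r_+)=0$.
   Context: Kerr spacetime with $M>0$, $|a|<M$, in ingoing Eddington–Finkelstein coordinates $(v,r,\theta,\phi)$ with metric $g_{ab}=-2(dr)_{(a}(dv)_{b)}+2a\sin^2\theta(d\phi)_{(a}(dr)_{b)}+\frac{4Mar\sin^2\theta}{\Sigma}(d\phi)_{(a}(dv)_{b)}+\frac{\Delta-a^2\sin^2\theta}{\Sigma}(dv)_a(dv)_b+\frac{a^2\sin^2\theta\Delta-(a^2+r^2)^2}{\Sigma}\sin^2\theta(d\phi)_a(d\phi)_b-\Sigma(d\theta)_a(d\theta)_b$, $\Sigma=r^2+a^2\cos^2\theta$, $\Delta=r^2-2Mr+a^2$, $r_+=M+\sqrt{M^2-a^2}$; the domain of outer communication is $\{r>r_+\}$. A function $t=v-k(r)$ is horizon crossing if (a) $k$ is smooth in an open neighbourhood of $[r_+,\infty)$, (b) the level sets of $t$ are strictly spacelike in $\{r>r_+\}$, and (c) for large $r$, $k'(r)-(a^2+r^2)/\Delta=O(r^{-2})$. *)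

From Stdlib Require Import Reals Lra.
From Coquelicot Require Import Coquelicot.
Open Scope R_scope.

Definition Sigma (a r th : R) : R := r ^ 2 + a ^ 2 * (cos th) ^ 2.
Definition Delta (M a r : R) : R := r ^ 2 - 2 * M * r + a ^ 2.
Definition rplus (M a : R) : R := M + sqrt (M ^ 2 - a ^ 2).

(* g(X,X) for X = Xv d/dv + Xr d/dr + Xth d/dth + Xph d/dph at a point with
   coordinates (v, r, th, ph); the metric components do not depend on v, ph.
   g_ab = -2 (dr)_(a (dv)_b) + 2 a sin^2 th (dph)_(a (dr)_b)
          + (4 M a r sin^2 th / Sigma) (dph)_(a (dv)_b)
          + (Delta - a^2 sin^2 th)/Sigma (dv)_a (dv)_b
          + (a^2 sin^2 th Delta - (a^2+r^2)^2)/Sigma sin^2 th (dph)_a (dph)_b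
          - Sigma (dth)_a (dth)_b *)
Definition kerr_g (M a r th Xv Xr Xth Xph : R) : R :=
  let S := Sigma a r th in
  let D := Delta M a r in
  let s2 := (sin th) ^ 2 in
  - 2 * Xr * Xv
  + 2 * a * s2 * Xph * Xr
  + (4 * M * a * r * s2 / S) * Xph * Xv
  + ((D - a ^ 2 * s2) / S) * Xv ^ 2
  + ((a ^ 2 * s2 * D - (a ^ 2 + r ^ 2) ^ 2) / S) * s2 * Xph ^ 2
  - S * Xth ^ 2.

Definition smooth_on (U : R -> Prop) (k : R -> R) : Prop :=
  forall (n : nat) (x : R), U x -> ex_derive (Derive_n k n) x.

(* The level sets of t = v - k(r) are strictly spacelike in {r > r_+}:
   at every point of the chart (r > r_+, 0 < th < PI; v, ph arbitrary and
   irrelevant since the metric is independent of them), the metric restricted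
   to ker dt = {X | Xv - k'(r) Xr = 0} is negative definite
   (signature (+,-,-,-)). *)
Definition level_sets_spacelike (M a : R) (k : R -> R) : Prop :=
  forall r th : R, rplus M a < r -> 0 < th < PI ->
  forall Xv Xr Xth Xph : R,
    Xv - Derive k r * Xr = 0 ->
    (Xv <> 0 \/ Xr <> 0 \/ Xth <> 0 \/ Xph <> 0) ->
    kerr_g M a r th Xv Xr Xth Xph < 0.

Definition horizon_crossing (M a : R) (k : R -> R) : Prop :=
  (exists U : R -> Prop, open U /\ (forall r, rplus M a <= r -> U r) /\ smooth_on U k)
  /\ level_sets_spacelike M a k
  /\ (exists C R0 : R, forall r, R0 <= r ->
        Rabs (Derive k r - (a ^ 2 + r ^ 2) / Delta M a r) <= C / r ^ 2).

Definition h_hor (M a Chyp r : R) : R :=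
  let rp := rplus M a in
  2 * (r - rp) + 4 * M * ln (r / rp)
  + 3 * M ^ 2 * (rp - r) ^ 2 / (rp * r ^ 2)
  + 2 * M * atan ((Chyp - 1) * M / r)
  - 2 * M * atan ((Chyp - 1) * M / rp).

Definition k_hor (M a Chyp : R) (r : R) : R := h_hor M a Chyp r / 2.

(* Write c = C_hyp - 1. The derivative
     k'(r) = 1 + 2M/r + 3M^2 (r - r_+)/r^3 - c M^2/(r^2 + c^2 M^2)
   is a rational function without poles on (0, oo), so k is smooth there.
   On ker dt we have X^v = k'(r) X^r, and Sigma g(X,X) is a binary quadratic
   form in (X^r, X^phi) minus Sigma^2 (X^theta)^2; it is negative definite
   as soon as Delta k'^2 - 2 (r^2 + a^2) k' + a^2 sin^2 theta < 0, which
   follows from 1 <= k' and k' Delta < 2 r^2 + a^2, i.e. from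
   1 <= k' <= 1 + 2M/r + 3M^2/r^2 for r > r_+. For the asymptotics,
   k' - (r^2 + a^2)/Delta = 2M (a^2 - 2Mr)/(r Delta) + the last two terms
   of k', and each of these three pieces is O(r^-2). *)

From Stdlib Require Import Reals Lra.
From Coquelicot Require Import Coquelicot.
(* Imported last so that [Delta] is the Kerr function, not Coquelicot's. *)
Open Scope R_scope.

Section SmoothOnOpen.

Variable U : R -> Prop.
Hypothesis U_open : open U.

Lemma Derive_n_S_of_derive (f f' : R -> R) (n : nat) (x : R) :
  (forall y, U y -> is_derive f y (f' y)) -> U x ->
  Derive_n f (S n) x = Derive_n f' n x.
Proof.
  intros Hf Hx.
  rewrite <- Nat.add_1_r, <- Derive_n_comp.
  apply Derive_n_ext_loc.
  apply (filter_imp U); [|exact (U_open x Hx)].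
  intros y Hy; exact (is_derive_unique _ _ _ (Hf y Hy)).
Qed.

Lemma ex_derive_Derive_n_S (f f' : R -> R) (n : nat) (x : R) :
  (forall y, U y -> is_derive f y (f' y)) -> U x ->
  ex_derive (Derive_n f' n) x -> ex_derive (Derive_n f (S n)) x.
Proof.
  intros Hf Hx.
  apply ex_derive_ext_loc.
  apply (filter_imp U); [|exact (U_open x Hx)].
  intros y Hy; symmetry; exact (Derive_n_S_of_derive f f' n y Hf Hy).
Qed.

Lemma smooth_on_of_derive (f f' : R -> R) :
  (forall x, U x -> is_derive f x (f' x)) -> smooth_on U f' -> smooth_on U f.
Proof.
  intros Hf Hf' [|n] x Hx.
  - exists (f' x); exact (Hf x Hx).
  - exact (ex_derive_Derive_n_S f f' n x Hf Hx (Hf' n x Hx)).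
Qed.

Lemma smooth_on_of_derive_closed (P : (R -> R) -> Prop) :
  (forall f, P f -> exists f', P f' /\ forall x, U x -> is_derive f x (f' x)) ->
  forall f, P f -> smooth_on U f.
Proof.
  intros HP f Hf n; revert f Hf.
  induction n as [|n IHn]; intros f Hf x Hx;
    destruct (HP f Hf) as [f' [Hf' Hd]].
  - exists (f' x); exact (Hd x Hx).
  - exact (ex_derive_Derive_n_S f f' n x Hd Hx (IHn f' Hf' x Hx)).
Qed.

End SmoothOnOpen.

Inductive rational_on (U : R -> Prop) : (R -> R) -> Prop :=
  | rational_const (c : R) : rational_on U (fun _ => c)
  | rational_id : rational_on U (fun x => x)
  | rational_opp (f : R -> R) :
      rational_on U f -> rational_on U (fun x => - f x)
  | rational_add (f g : R -> R) :
      rational_on U f -> rational_on U g -> rational_on U (fun x => f x + g x)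
  | rational_mul (f g : R -> R) :
      rational_on U f -> rational_on U g -> rational_on U (fun x => f x * g x)
  | rational_inv (f : R -> R) :
      rational_on U f -> (forall x, U x -> f x <> 0) ->
      rational_on U (fun x => / f x).

Lemma rational_pow (U : R -> Prop) (f : R -> R) (n : nat) :
  rational_on U f -> rational_on U (fun x => f x ^ n).
Proof.
  intros Hf; induction n as [|n IHn].
  - exact (rational_const U 1).
  - exact (rational_mul U f (fun x => f x ^ n) Hf IHn).
Qed.

Lemma rational_on_derive (U : R -> Prop) (f : R -> R) :
  rational_on U f -> exists f', rational_on U f' /\ forall x, U x -> is_derive f x (f' x).
Proof.
  induction 1 as [c| |f _ [f' [Hf' Hd]]|f g _ [f' [Hf' Hdf]] _ [g' [Hg' Hdg]]
                  |f g Hf [f' [Hf' Hdf]] Hg [g' [Hg' Hdg]]|f Hf [f' [Hf' Hd]] Hf0].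
  - exists (fun _ => 0); split; [constructor|]. intros x _; exact (is_derive_const c x).
  - exists (fun _ => 1); split; [constructor|]. intros x _; exact (is_derive_id x).
  - exists (fun x => - f' x); split; [constructor; exact Hf'|].
    intros x Hx; exact (is_derive_opp f x _ (Hd x Hx)).
  - exists (fun x => f' x + g' x); split; [constructor; assumption|].
    intros x Hx; exact (is_derive_plus f g x _ _ (Hdf x Hx) (Hdg x Hx)).
  - exists (fun x => f' x * g x + f x * g' x).
    split; [repeat constructor; assumption|].
    intros x Hx; apply (is_derive_mult f g x _ _ (Hdf x Hx) (Hdg x Hx)).
    intros; apply Rmult_comm.
  - exists (fun x => - f' x * / f x ^ 2); split.
    + apply rational_mul; [constructor; exact Hf'|].
      apply rational_inv; [exact (rational_pow U f 2 Hf)|].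
      intros x Hx; exact (pow_nonzero _ 2 (Hf0 x Hx)).
    + intros x Hx; exact (is_derive_inv f x _ (Hd x Hx) (Hf0 x Hx)).
Qed.

Lemma rational_on_smooth (U : R -> Prop) (f : R -> R) :
  open U -> rational_on U f -> smooth_on U f.
Proof.
  intros HU; exact (smooth_on_of_derive_closed U HU (rational_on U) (rational_on_derive U) f).
Qed.

Lemma Rdiv_le_Rdiv_cross (a b c d : R) :
  0 < b -> 0 < d -> a * d <= c * b -> a / b <= c / d.
Proof.
  intros Hb Hd H.
  apply Rle_div_l; [lra|].
  replace (c / d * b) with (c * b / d) by (field; lra).
  apply Rle_div_r; lra.
Qed.

Lemma quad_form_neg (A B C x y : R) :
  C < 0 -> B ^ 2 < A * C -> (x <> 0 \/ y <> 0) ->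
  A * x ^ 2 + 2 * B * x * y + C * y ^ 2 < 0.
Proof.
  intros HC HD Hxy.
  assert (E : C * (A * x ^ 2 + 2 * B * x * y + C * y ^ 2)
              = (C * y + B * x) ^ 2 + (A * C - B ^ 2) * x ^ 2) by ring.
  destruct (Req_dec x 0) as [->|Hx].
  - destruct Hxy as [|Hy]; [lra|].
    assert (0 < y ^ 2) by (apply pow2_gt_0; exact Hy). nra.
  - assert (0 < x ^ 2) by (apply pow2_gt_0; exact Hx).
    pose proof (pow2_ge_0 (C * y + B * x)). nra.
Qed.

Lemma rplus_bounds (M a : R) : 0 <= M -> a ^ 2 <= M ^ 2 -> M <= rplus M a <= 2 * M.
Proof.
  intros HM Ha; unfold rplus.
  pose proof (sqrt_pos (M ^ 2 - a ^ 2)).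
  assert (Hle := sqrt_le_1_alt (M ^ 2 - a ^ 2) (M ^ 2) ltac:(pose proof (pow2_ge_0 a); lra)).
  rewrite sqrt_pow2 in Hle by exact HM.
  lra.
Qed.

Lemma Delta_pos (M a r : R) : a ^ 2 <= M ^ 2 -> rplus M a < r -> 0 < Delta M a r.
Proof.
  unfold rplus, Delta; intros Ha Hr.
  pose proof (sqrt_pos (M ^ 2 - a ^ 2)).
  pose proof (sqrt_sqrt (M ^ 2 - a ^ 2) ltac:(lra)).
  nra.
Qed.

Lemma Delta_ge_half_sq (M a r : R) : 0 <= M -> 4 * M <= r -> r ^ 2 / 2 <= Delta M a r.
Proof. unfold Delta; intros HM Hr; pose proof (pow2_ge_0 a); nra. Qed.

Lemma kerr_g_on_kernel (M a r th D Xr Xth Xph : R) :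
  Sigma a r th <> 0 ->
  let s := sin th ^ 2 in
  let S := Sigma a r th in
  let De := Delta M a r in
  S * kerr_g M a r th (D * Xr) Xr Xth Xph =
    (- 2 * S * D + (De - a ^ 2 * s) * D ^ 2) * Xr ^ 2
    + 2 * (a * s * (S + 2 * M * r * D)) * Xr * Xph
    + s * (a ^ 2 * s * De - (a ^ 2 + r ^ 2) ^ 2) * Xph ^ 2
    - S ^ 2 * Xth ^ 2.
Proof. intros HS; unfold kerr_g; field; exact HS. Qed.

Lemma kernel_phph_coeff_neg (M a r s : R) :
  0 <= M -> 0 < r -> 0 < Delta M a r -> 0 < s <= 1 ->
  s * (a ^ 2 * s * Delta M a r - (a ^ 2 + r ^ 2) ^ 2) < 0.
Proof.
  intros HM Hr HDe Hs.
  assert (Delta M a r <= a ^ 2 + r ^ 2) by (unfold Delta; nra).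
  assert (0 < r ^ 2) by (apply pow_lt; lra).
  pose proof (pow2_ge_0 a).
  assert (0 <= a ^ 2 * Delta M a r * (1 - s))
    by (apply Rmult_le_pos; [apply Rmult_le_pos|]; lra).
  assert (0 <= a ^ 2 * (a ^ 2 + r ^ 2 - Delta M a r)) by (apply Rmult_le_pos; lra).
  assert (a ^ 2 * s * Delta M a r - (a ^ 2 + r ^ 2) ^ 2 < 0) by nra.
  nra.
Qed.

Lemma kernel_discriminant_pos (M a r s S D : R) :
  0 < s <= 1 -> S = r ^ 2 + a ^ 2 * (1 - s) -> 0 < S ->
  1 <= D -> D * Delta M a r < 2 * r ^ 2 + a ^ 2 ->
  (a * s * (S + 2 * M * r * D)) ^ 2 <
  (- 2 * S * D + (Delta M a r - a ^ 2 * s) * D ^ 2)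
  * (s * (a ^ 2 * s * Delta M a r - (a ^ 2 + r ^ 2) ^ 2)).
Proof.
  intros Hs HS HSpos HD1 HD2.
  assert (Hquad : Delta M a r * D ^ 2 - 2 * (r ^ 2 + a ^ 2) * D + a ^ 2 * s < 0)
    by (pose proof (pow2_ge_0 a); nra).
  assert (0 < s * S ^ 2) by (apply Rmult_lt_0_compat; [lra | apply pow_lt; lra]).
  rewrite HS in *; unfold Delta in *; nra.
Qed.

Lemma kerr_g_lt0_on_kernel (M a r th D Xr Xth Xph : R) :
  0 <= M -> 0 < r -> 0 < Delta M a r -> 0 < sin th ->
  1 <= D -> D * Delta M a r < 2 * r ^ 2 + a ^ 2 ->
  (D * Xr <> 0 \/ Xr <> 0 \/ Xth <> 0 \/ Xph <> 0) ->
  kerr_g M a r th (D * Xr) Xr Xth Xph < 0.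
Proof.
  intros HM Hr HDe Hsin HD1 HD2 HX.
  pose proof (sin2_cos2 th) as Hpyth; unfold Rsqr in Hpyth.
  assert (Hs : 0 < sin th ^ 2 <= 1).
  { pose proof (pow2_ge_0 (cos th)); split; [apply pow_lt | simpl]; lra. }
  assert (HS : Sigma a r th = r ^ 2 + a ^ 2 * (1 - sin th ^ 2))
    by (unfold Sigma; simpl; nra).
  assert (HSpos : 0 < Sigma a r th).
  { rewrite HS; pose proof (pow2_ge_0 a); assert (0 < r ^ 2) by (apply pow_lt; lra); nra. }
  pose proof (kernel_phph_coeff_neg M a r _ HM Hr HDe Hs) as HC.
  pose proof (kernel_discriminant_pos M a r _ _ D Hs HS HSpos HD1 HD2) as Hdisc.
  pose proof (kerr_g_on_kernel M a r th D Xr Xth Xph (Rgt_not_eq _ _ HSpos)) as Hg.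
  cbv zeta in Hg.
  assert (0 <= (Sigma a r th * Xth) ^ 2) by apply pow2_ge_0.
  destruct (Req_dec Xr 0) as [->|Hr0]; [destruct (Req_dec Xph 0) as [->|Hp0]|].
  - destruct HX as [HX|[HX|[HX|HX]]]; try (exfalso; apply HX; ring).
    assert (0 < (Sigma a r th * Xth) ^ 2)
      by (apply pow2_gt_0, Rmult_integral_contrapositive; split; lra).
    nra.
  - pose proof (quad_form_neg _ _ _ 0 Xph HC Hdisc (or_intror Hp0)); nra.
  - pose proof (quad_form_neg _ _ _ Xr Xph HC Hdisc (or_introl Hr0)); nra.
Qed.

Definition dk_hor (M rp c r : R) : R :=
  1 + 2 * M / r + 3 * M ^ 2 * (r - rp) / r ^ 3 - c * M ^ 2 / (r ^ 2 + (c * M) ^ 2).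

Lemma dk_hor_rational (M rp c : R) : rational_on (fun r => 0 < r) (dk_hor M rp c).
Proof.
  unfold dk_hor, Rdiv, Rminus.
  repeat first [apply rational_pow | constructor]; intros r Hr.
  - lra.
  - apply pow_nonzero; lra.
  - pose proof (pow2_ge_0 (c * M)); nra.
Qed.

Lemma is_derive_k_hor (M a Chyp r : R) : 0 < rplus M a -> 0 < r ->
  is_derive (k_hor M a Chyp) r (dk_hor M (rplus M a) (Chyp - 1) r).
Proof.
  intros Hp Hr.
  unfold k_hor, h_hor, dk_hor.
  set (rp := rplus M a) in *.
  assert (Hb : 0 < r ^ 2 + ((Chyp - 1) * M) ^ 2)
    by (pose proof (pow2_ge_0 ((Chyp - 1) * M)); nra).
  auto_derive.
  - repeat split; try lra.
    + apply Rmult_lt_0_compat; [lra | now apply Rinv_0_lt_compat].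
    + apply Rgt_not_eq, Rmult_lt_0_compat; [lra | nra].
  - match goal with |- ?lhs = ?rhs => change (@eq R lhs rhs) end.
    field; repeat split; try lra.
Qed.

Lemma Derive_k_hor (M a Chyp r : R) : 0 < rplus M a -> 0 < r ->
  Derive (k_hor M a Chyp) r = dk_hor M (rplus M a) (Chyp - 1) r.
Proof. intros Hp Hr; exact (is_derive_unique _ _ _ (is_derive_k_hor M a Chyp r Hp Hr)). Qed.

Lemma k_hor_smooth (M a Chyp : R) :
  0 < rplus M a -> smooth_on (fun r => 0 < r) (k_hor M a Chyp).
Proof.
  intros Hp.
  apply (smooth_on_of_derive _ (open_gt 0) _ (dk_hor M (rplus M a) (Chyp - 1))).
  - intros r Hr; exact (is_derive_k_hor M a Chyp r Hp Hr).
  - exact (rational_on_smooth _ _ (open_gt 0) (dk_hor_rational M (rplus M a) (Chyp - 1))).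
Qed.

Lemma cubic_term_bounds (m rp r : R) :
  0 <= m -> 0 <= rp <= r -> 0 < r ->
  0 <= m * (r - rp) / r ^ 3 <= m / r ^ 2.
Proof.
  intros Hm Hrp Hr.
  assert (0 < r ^ 2) by (apply pow_lt; lra).
  split.
  - apply Rdiv_le_0_compat; [nra | apply pow_lt; lra].
  - apply Rdiv_le_Rdiv_cross; [apply pow_lt; lra | lra |].
    assert (0 <= m * r ^ 2 * rp) by (apply Rmult_le_pos; [apply Rmult_le_pos|]; lra).
    replace (r ^ 3) with (r ^ 2 * r) by ring; nra.
Qed.

Lemma arctan_term_bounds (M c r : R) :
  0 <= M -> 0 <= c -> 0 < r ->
  0 <= c * M ^ 2 / (r ^ 2 + (c * M) ^ 2) <= 2 * M / r
  /\ c * M ^ 2 / (r ^ 2 + (c * M) ^ 2) <= c * M ^ 2 / r ^ 2.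
Proof.
  intros HM Hc Hr.
  assert (0 < r ^ 2) by (apply pow_lt; lra).
  assert (0 <= c * M ^ 2) by (pose proof (pow2_ge_0 M); nra).
  assert (Hden : 0 < r ^ 2 + (c * M) ^ 2) by (pose proof (pow2_ge_0 (c * M)); lra).
  split; [split|].
  - apply Rdiv_le_0_compat; lra.
  - apply Rdiv_le_Rdiv_cross; [lra | lra |].
    assert (0 <= M * (2 * r ^ 2 - c * M * r + 2 * (c * M) ^ 2)) by (apply Rmult_le_pos; nra).
    nra.
  - apply Rdiv_le_Rdiv_cross; [lra | lra |].
    pose proof (pow2_ge_0 (c * M)); nra.
Qed.

Lemma Delta_term_bounds (M a r : R) :
  0 <= M -> a ^ 2 <= M ^ 2 -> 4 * M <= r -> 0 < r ->
  - (8 * M ^ 2 / r ^ 2) <= 2 * M * (a ^ 2 - 2 * M * r) / (r * Delta M a r) <= 0.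
Proof.
  intros HM Ha Hr Hr0.
  pose proof (Delta_ge_half_sq M a r HM Hr) as HDe.
  assert (0 < r ^ 2) by (apply pow_lt; lra).
  assert (0 < r * Delta M a r) by (apply Rmult_lt_0_compat; lra).
  pose proof (pow2_ge_0 a).
  split.
  - rewrite <- Rdiv_opp_l; apply Rdiv_le_Rdiv_cross; [lra | lra |].
    assert (0 <= M ^ 2 * r * (Delta M a r - r ^ 2 / 2))
      by (apply Rmult_le_pos; [apply Rmult_le_pos; [apply pow2_ge_0 | lra] | lra]).
    assert (0 <= M * a ^ 2 * r ^ 2)
      by (apply Rmult_le_pos; [apply Rmult_le_pos|]; lra).
    nra.
  - apply Rle_div_l; [lra|]. nra.
Qed.

Lemma dk_hor_bounds (M rp c r : R) :
  0 <= M -> 0 <= c -> 0 <= rp <= r -> 0 < r ->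
  1 <= dk_hor M rp c r <= 1 + 2 * M / r + 3 * M ^ 2 / r ^ 2.
Proof.
  intros HM Hc Hrp Hr; unfold dk_hor.
  assert (H3 : 0 <= 3 * M ^ 2) by (pose proof (pow2_ge_0 M); lra).
  pose proof (cubic_term_bounds (3 * M ^ 2) rp r H3 Hrp Hr).
  pose proof (arctan_term_bounds M c r HM Hc Hr) as [? _].
  lra.
Qed.

Lemma Delta_mul_slope_lt (M a r D : R) :
  0 < M -> a ^ 2 <= M ^ 2 -> M <= r -> 0 < Delta M a r ->
  D <= 1 + 2 * M / r + 3 * M ^ 2 / r ^ 2 ->
  D * Delta M a r < 2 * r ^ 2 + a ^ 2.
Proof.
  intros HM Ha Hr HDe HD.
  assert (Hr2 : 0 < r ^ 2) by (apply pow_lt; lra).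
  assert (Hpoly : (r ^ 2 + 2 * M * r + 3 * M ^ 2) * Delta M a r < (2 * r ^ 2 + a ^ 2) * r ^ 2).
  { unfold Delta.
    assert (M ^ 4 <= r ^ 4) by (apply pow_incr; lra).
    assert (M ^ 2 <= r ^ 2) by (apply pow_incr; lra).
    assert (2 * M * a ^ 2 * r <= 2 * M * M ^ 2 * r) by (apply Rmult_le_compat_r; nra).
    assert (3 * M ^ 2 * a ^ 2 <= 3 * M ^ 2 * M ^ 2) by nra.
    assert (0 < M ^ 4) by (apply pow_lt; lra).
    simpl in *; nra. }
  replace (1 + 2 * M / r + 3 * M ^ 2 / r ^ 2) with ((r ^ 2 + 2 * M * r + 3 * M ^ 2) / r ^ 2)
    in HD by (field; lra).
  apply Rmult_le_compat_r with (r := Delta M a r) in HD; [|lra].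
  replace ((r ^ 2 + 2 * M * r + 3 * M ^ 2) / r ^ 2 * Delta M a r)
    with ((r ^ 2 + 2 * M * r + 3 * M ^ 2) * Delta M a r / r ^ 2) in HD by (field; lra).
  apply Rlt_div_l in Hpoly; [lra | lra].
Qed.

Lemma k_hor_level_sets_spacelike (M a Chyp : R) :
  0 < M -> a ^ 2 <= M ^ 2 -> 1 <= Chyp -> level_sets_spacelike M a (k_hor M a Chyp).
Proof.
  intros HM Ha HC r th Hr Hth Xv Xr Xth Xph HX Hne.
  pose proof (rplus_bounds M a (Rlt_le _ _ HM) Ha) as Hrp.
  assert (Hr0 : 0 < r) by lra.
  rewrite Derive_k_hor in HX by lra.
  pose proof (dk_hor_bounds M (rplus M a) (Chyp - 1) r ltac:(lra) ltac:(lra) ltac:(lra) Hr0)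
    as [HD1 HD2].
  pose proof (Delta_pos M a r Ha Hr) as HDe.
  replace Xv with (dk_hor M (rplus M a) (Chyp - 1) r * Xr) in * by lra.
  apply kerr_g_lt0_on_kernel; try lra.
  - apply sin_gt_0; lra.
  - apply Delta_mul_slope_lt; lra.
Qed.

Lemma k_hor_asymptotic (M a Chyp : R) :
  0 < M -> a ^ 2 <= M ^ 2 -> 1 <= Chyp ->
  forall r, 4 * M <= r ->
  Rabs (Derive (k_hor M a Chyp) r - (a ^ 2 + r ^ 2) / Delta M a r)
  <= (10 + Chyp) * M ^ 2 / r ^ 2.
Proof.
  intros HM Ha HC r Hr.
  pose proof (rplus_bounds M a (Rlt_le _ _ HM) Ha) as Hrp.
  assert (Hr0 : 0 < r) by lra.
  pose proof (Delta_ge_half_sq M a r (Rlt_le _ _ HM) Hr) as HDe.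
  assert (0 < r ^ 2) by (apply pow_lt; lra).
  rewrite Derive_k_hor by lra.
  set (c := Chyp - 1).
  replace (dk_hor M (rplus M a) c r - (a ^ 2 + r ^ 2) / Delta M a r)
    with (2 * M * (a ^ 2 - 2 * M * r) / (r * Delta M a r)
          + 3 * M ^ 2 * (r - rplus M a) / r ^ 3 - c * M ^ 2 / (r ^ 2 + (c * M) ^ 2))
    by (unfold dk_hor, Delta in *; field; split; [nra | split; nra]).
  replace ((10 + Chyp) * M ^ 2 / r ^ 2)
    with (8 * M ^ 2 / r ^ 2 + 3 * M ^ 2 / r ^ 2 + c * M ^ 2 / r ^ 2) by (unfold c; field; lra).
  pose proof (Delta_term_bounds M a r (Rlt_le _ _ HM) Ha Hr Hr0).
  pose proof (cubic_term_bounds (3 * M ^ 2) (rplus M a) r ltac:(nra) ltac:(lra) Hr0).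
  pose proof (arctan_term_bounds M c r ltac:(lra) ltac:(unfold c; lra) Hr0) as [[? _] ?].
  assert (0 <= c * M ^ 2 / r ^ 2) by (apply Rdiv_le_0_compat; [unfold c; nra | lra]).
  apply Rabs_le; lra.
Qed.

Lemma k_hor_rplus (M a Chyp : R) : 0 < rplus M a -> k_hor M a Chyp (rplus M a) = 0.
Proof.
  intros Hp; unfold k_hor, h_hor.
  rewrite Rdiv_diag, ln_1 by lra.
  field; lra.
Qed.

Theorem lemma2p22 (M a Chyp : R) :
  0 < M -> Rabs a < M -> 1 <= Chyp ->
  horizon_crossing M a (k_hor M a Chyp) /\ k_hor M a Chyp (rplus M a) = 0.
Proof.
  intros HM Ha HC.
  assert (Ha2 : a ^ 2 <= M ^ 2) by (apply Rabs_def2 in Ha; nra).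
  pose proof (rplus_bounds M a (Rlt_le _ _ HM) Ha2) as Hrp.
  split; [repeat split|].
  - exists (fun r => 0 < r); repeat split.
    + exact (open_gt 0).
    + intros r Hr; lra.
    + apply k_hor_smooth; lra.
  - exact (k_hor_level_sets_spacelike M a Chyp HM Ha2 HC).
  - exists ((10 + Chyp) * M ^ 2), (4 * M).
    exact (k_hor_asymptotic M a Chyp HM Ha2 HC).
  - apply k_hor_rplus; lra.
Qed.
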